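(* Let $\boldsymbol{u}^\star\in\mathbb{R}^n\setminus\{\boldsymbol{0}\}$ and $f(\boldsymbol{u})=\frac12\|\boldsymbol{u}\boldsymbol{u}^{\mathrm T}-\boldsymbol{u}^\star{\boldsymbol{u}^\star}^{\mathrm T}\|_1$ on $\mathbb{R}^n$. Then for every $\boldsymbol{w}\in\mathbb{R}^n$, $$df(\boldsymbol{u}^\star)(\boldsymbol{w})\ge\min\Big\{\alpha(\boldsymbol{u}^\star),\ \tfrac12\alpha(\boldsymbol{u}^\star)\,|\operatorname{supp}(\boldsymbol{u}^\star)|\Big\}\cdot\|\boldsymbol{w}\|_1,$$ where $\alpha(\boldsymbol{u}^\star):=\min\{|u_i^\star|:i\in\operatorname{supp}(\boldsymbol{u}^\star)\}>0$.
   Context: $\|\cdot\|_1$ is the entrywise $\ell_1$-norm (for vectors and matrices). $\operatorname{supp}(\boldsymbol{x})=\{i:x_i\ne0\}$. $df(\boldsymbol{x})(\boldsymbol{w})=\lim_{t\searrow0}(f(\boldsymbol{x}+t\boldsymbol{w})-f(\boldsymbol{x}))/t$ is the directional derivative (which exists for this $f$). *)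

From HB Require Import structures.
From mathcomp Require Import all_boot all_order all_algebra.
From mathcomp Require Import all_classical all_reals all_analysis.
Set Implicit Arguments. Unset Strict Implicit. Unset Printing Implicit Defensive.
Import Order.TTheory GRing.Theory Num.Theory.
Import numFieldNormedType.Exports.
Local Open Scope classical_set_scope.
Local Open Scope ring_scope.

Definition l1norm (R : realType) (m n : nat) (A : 'M[R]_(m, n)) : R :=
  \sum_(i < m) \sum_(j < n) `|A i j|.

Definition fobj (R : realType) (n : nat) (us u : 'cV[R]_n) : R :=
  2^-1 * l1norm (u *m u^T - us *m us^T).

Definition supp (R : realType) (n : nat) (x : 'cV[R]_n) : {set 'I_n} :=
  [set i | x i 0 != 0].

(* alpha(x) = min { |x_i| : i in supp x }; the seed (sum of all |x_i|)
   is >= every |x_i|, so for x <> 0 this is exactly the minimum. *)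
Definition alpha (R : realType) (n : nat) (x : 'cV[R]_n) : R :=
  \big[Num.min/(\sum_(i < n) `|x i 0|)]_(i in supp x) `|x i 0|.

Definition dirderiv (R : realType) (n : nat) (f : 'cV[R]_n -> R)
    (x w : 'cV[R]_n) : R :=
  lim ((fun t : R => (f (x + t *: w) - f x) / t) @ 0^'+).

From HB Require Import structures.
From mathcomp Require Import all_boot all_order all_algebra.
From mathcomp Require Import all_classical all_reals all_analysis.
From mathcomp Require Import ring.
Import Order.TTheory GRing.Theory Num.Theory.
Local Open Scope ring_scope.
Local Open Scope classical_set_scope.
Import numFieldNormedType.Exports.

(* Expanding (u + t w)(u + t w)^T - u u^T = t (u w^T + w u^T + t w w^T) shows
   that df(u)(w) = 1/2 ||u w^T + w u^T||_1.  Row i of this matrix has entries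
   u_i w_j + w_i u_j.  If u_i <> 0, its diagonal entry 2 u_i w_i alone gives
   1/2 |2 u_i w_i| >= alpha |w_i|; if u_i = 0, the row is w_i u^T, whose
   l1 norm |w_i| ||u||_1 is at least |w_i| alpha |supp u|. *)

Section L1Norm.
Variables (R : realType) (m n : nat).

Lemma l1norm0 : l1norm (0 : 'M[R]_(m, n)) = 0.
Proof. by rewrite /l1norm big1 // => i _; rewrite big1 // => j _; rewrite mxE normr0. Qed.

Lemma l1normZ (a : R) (A : 'M[R]_(m, n)) : l1norm (a *: A) = `|a| * l1norm A.
Proof.
rewrite /l1norm mulr_sumr; apply: eq_bigr => i _.
by rewrite mulr_sumr; apply: eq_bigr => j _; rewrite mxE normrM.
Qed.

Lemma cvg_l1norm_shift (A B : 'M[R]_(m, n)) :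
  l1norm (A + t *: B) @[t --> 0] --> l1norm A.
Proof.
have addC := @pseudometric_normed_Zmodule.add_continuous R R^o.
have -> : l1norm A = l1norm (A + 0 *: B) by rewrite scale0r addr0.
rewrite /l1norm; apply: (cvg_big addC) => // i _; apply: (cvg_big addC) => // j _.
rewrite !mxE; under eq_fun do rewrite !mxE.
apply: cvg_norm; apply: (@cvgD _ _ _ _ _ (fun=> A i j) (fun t => t * B i j)).
  exact: cvg_cst.
by apply: cvgMr_tmp; exact: cvg_id.
Qed.

End L1Norm.

Section Alpha.
Variables (R : realType) (n : nat) (x : 'cV[R]_n).

Lemma alpha_le_supp i : i \in supp x -> alpha x <= `|x i 0|.
Proof. exact: bigmin_le_cond. Qed.

Lemma alpha_mul_card_supp_le : alpha x * #|supp x|%:R <= \sum_(i < n) `|x i 0|.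
Proof.
rewrite (bigID (mem (supp x))) /= mulr_natr -sumr_const.
apply: ler_wpDr; first exact: sumr_ge0.
by apply: ler_sum => i; exact: alpha_le_supp.
Qed.

End Alpha.

Section DirectionalDerivative.
Variables (R : realType) (n : nat) (u w : 'cV[R]_n).

Lemma outer_shift t :
  (u + t *: w) *m (u + t *: w)^T - u *m u^T =
  t *: (u *m w^T + w *m u^T + t *: (w *m w^T)).
Proof. by apply/matrixP => i j; rewrite !mxE !big_ord1 !mxE; ring. Qed.

Lemma fobj_diff_quotient t : 0 < t ->
  (fobj u (u + t *: w) - fobj u u) / t =
  2^-1 * l1norm (u *m w^T + w *m u^T + t *: (w *m w^T)).
Proof.
move=> t_gt0; rewrite /fobj subrr l1norm0 mulr0 subr0 outer_shift l1normZ.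
by rewrite gtr0_norm // mulrCA mulrAC mulfV ?mul1r ?gt_eqF.
Qed.

Lemma dirderiv_fobj : dirderiv (fobj u) u w = 2^-1 * l1norm (u *m w^T + w *m u^T).
Proof.
have lim_quotient : 2^-1 * l1norm (u *m w^T + w *m u^T + t *: (w *m w^T))
    @[t --> 0^'+] --> 2^-1 * l1norm (u *m w^T + w *m u^T).
  by apply: cvgMl_tmp; apply: cvg_at_right_filter; exact: cvg_l1norm_shift.
apply: cvg_lim => //; apply: cvg_trans lim_quotient.
apply: near_eq_cvg; near=> t; apply/esym/fobj_diff_quotient; near: t.
exact: nbhs_right_gt.
Unshelve. all: end_near.
Qed.

End DirectionalDerivative.

Section RowLowerBound.
Variables (R : realType) (n : nat) (u w : 'cV[R]_n).

Let c := Num.min (alpha u) (2^-1 * alpha u * #|supp u|%:R).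

Lemma sym_outer_row_lower_bound i :
  c * `|w i 0| <= 2^-1 * \sum_(j < n) `|(u *m w^T + w *m u^T) i j|.
Proof.
have entry j : (u *m w^T + w *m u^T) i j = u i 0 * w j 0 + w i 0 * u j 0.
  by rewrite !mxE !big_ord1 !mxE.
have [ui0 | ui_neq0] := eqVneq (u i 0) 0.
- have c_le : c <= 2^-1 * alpha u * #|supp u|%:R by rewrite ge_min lexx orbT.
  under eq_bigr => j _ do rewrite entry ui0 mul0r add0r normrM.
  rewrite -mulr_sumr mulrCA [c * _]mulrC ler_wpM2l //.
  apply: (le_trans c_le); rewrite -mulrA ler_wpM2l ?invr_ge0 ?ler0n //.
  exact: alpha_mul_card_supp_le.
- have c_le : c <= `|u i 0| by rewrite ge_min alpha_le_supp // inE.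
  rewrite (bigD1 i) //= mulrDr; apply: ler_wpDr.
    by rewrite mulr_ge0 ?invr_ge0 ?ler0n ?sumr_ge0.
  rewrite entry.
  have -> : 2^-1 * `|u i 0 * w i 0 + w i 0 * u i 0| = `|u i 0| * `|w i 0|.
    by rewrite [w i 0 * _]mulrC -mulr2n normrMn normrM; field.
  by rewrite ler_wpM2r.
Qed.

End RowLowerBound.

Theorem proposition1 (R : realType) (n : nat) (us : 'cV[R]_n) :
  us != 0 ->
  forall w : 'cV[R]_n,
    Num.min (alpha us) (2^-1 * alpha us * (#|supp us|)%:R) * l1norm w
      <= dirderiv (fobj us) us w.
Proof.
move=> _ w; rewrite dirderiv_fobj /l1norm [in X in X <= _]mulr_sumr [in X in _ <= X]mulr_sumr.
apply: ler_sum => i _; rewrite big_ord1 (_ : ord0 = 0) //.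
exact: sym_outer_row_lower_bound.
Qed.
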